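(* For given cardinality vectors $\boldsymbol\varrho,\boldsymbol\varphi,\boldsymbol\psi$ and any receiver $i$ with $\psi_i\ge1$, the expected primary degree $\Delta_i$ of any vertex induced by receiver $i$ equals \[ \mathbb E[\Delta_i]=\sum_{k=1,k\ne i}^M\frac{\psi_k}{N}\Big(1+\frac{\varrho_k\varrho_i}{N-1}\Big). \]
   Context: A sender holds a frame $\mathcal N$ of $N\ge2$ packets and serves receivers $\mathcal M=\{1,\dots,M\}$. For each receiver $i$ there are sets $\mathcal H_i\subseteq\mathcal N$ (Has set), $\mathcal L_i=\mathcal N\setminus\mathcal H_i$ (Lacks set) and $\mathcal W_i\subseteq\mathcal L_i$ (Wants set), with cardinalities $\varrho_i=|\mathcal H_i|$, $\varphi_i=N-\varrho_i$, $\psi_i=|\mathcal W_i|$. The primary IDNC graph $\mathcal G_\rho$ has a vertex $v_{ij}$ for every receiver $i$ and every $j\in\mathcal W_i$; two distinct vertices $v_{ij},v_{kl}$ are adjacent iff (C1) $j=l$, or (C2) $j\in\mathcal H_k$ and $l\in\mathcal H_i$. The primary degree of a vertex is its degree in $\mathcal G_\rho$. Expectations are taken in the model that ignores set contents: given the cardinalities, the pairs $(\mathcal H_k,\mathcal W_k)$, $k\in\mathcal M$, are independent, $\mathcal H_k$ is a uniformly random $\varrho_k$-element subset of $\mathcal N$, and given $\mathcal H_k$, $\mathcal W_k$ is a uniformly random $\psi_k$-element subset of $\mathcal N\setminus\mathcal H_k$. The expected primary degree of a vertex induced by receiver $i$ means the expected degree of $v_{ij}$ conditioned on $j\in\mathcal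 W_i$, for a fixed packet $j$. *)

From HB Require Import structures.
From mathcomp Require Import all_boot all_order all_algebra.
Set Implicit Arguments. Unset Strict Implicit. Unset Printing Implicit Defensive.
Import Order.TTheory GRing.Theory Num.Theory.
Local Open Scope ring_scope.

(* Packets are 'I_N, receivers are 'I_M.  A configuration assigns to each
   receiver k its pair (Has set H_k, Wants set W_k). *)
Definition config (N M : nat) := {ffun 'I_M -> {set 'I_N} * {set 'I_N}}.

Definition Has N M (c : config N M) (k : 'I_M) : {set 'I_N} := (c k).1.
Definition Wants N M (c : config N M) (k : 'I_M) : {set 'I_N} := (c k).2.
Definition Lacks N M (c : config N M) (k : 'I_M) : {set 'I_N} := ~: Has c k.

(* Vertices of the primary IDNC graph: v_kl for l in W_k, encoded as (k,l). *)
Definition is_vertex N M (c : config N M) (v : 'I_M * 'I_N) : bool :=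
  v.2 \in Wants c v.1.

Definition idnc_adj N M (c : config N M) (v w : 'I_M * 'I_N) : bool :=
  (v != w) && ((v.2 == w.2) || ((v.2 \in Has c w.1) && (w.2 \in Has c v.1))).

Definition primary_degree N M (c : config N M) (v : 'I_M * 'I_N) : nat :=
  #|[set w | is_vertex c w && idnc_adj c v w]|.

(* Probability of (H_k, W_k) = (H, W): H uniform among rho-subsets,
   and given H, W uniform among psi-subsets of N \ H. *)
Definition pair_prob (R : realFieldType) (N rho psi : nat)
    (p : {set 'I_N} * {set 'I_N}) : R :=
  if [&& #|p.1| == rho, p.2 \subset ~: p.1 & #|p.2| == psi]
  then ('C(N, rho)%:R)^-1 * ('C(N - rho, psi)%:R)^-1
  else 0.

Definition config_prob (R : realFieldType) (N M : nat)
    (rho psi : 'I_M -> nat) (c : config N M) : R :=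
  \prod_(k < M) @pair_prob R N (rho k) (psi k) (c k).

Definition expected_primary_degree (R : realFieldType) (N M : nat)
    (rho psi : 'I_M -> nat) (i : 'I_M) (j : 'I_N) : R :=
  (\sum_(c : config N M) @config_prob R N M rho psi c * (j \in Wants c i)%:R
        * (primary_degree c (i, j))%:R)
  / (\sum_(c : config N M) @config_prob R N M rho psi c * (j \in Wants c i)%:R).

(* Given j in W_i (hence j not in H_i), the neighbours of v_ij are the v_kj
   with k <> i and j in W_k, and the v_kl with k <> i, l <> j, l in H_i,
   l in W_k and j in H_k; receiver i itself contributes none.  Since the
   receivers are independent, every such event has a probability that factors
   over receivers i and k, and the one-receiver probabilities follow from the
   invariance of the law of (H, W) under relabelling the packets:
   P(j in W) = psi/N and, for l <> j, P(l in W, j in H) = psi rho/(N(N-1)).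
   Conditioning on j in W_i finally divides by psi_i/N. *)

From mathcomp Require Import all_boot all_order all_algebra all_fingroup.
From mathcomp Require Import zify ring.
Set Implicit Arguments. Unset Strict Implicit. Unset Printing Implicit Defensive.
Import Order.TTheory GRing.Theory Num.Theory.
Local Open Scope ring_scope.

Lemma sum_mem_natr (R : pzSemiRingType) (T : finType) (A : pred T) :
  \sum_(t : T) ((t \in A)%:R : R) = #|A|%:R.
Proof.
rewrite -sum1_card natr_sum [RHS]big_mkcond; apply: eq_bigr => t _.
by case: (t \in A).
Qed.

Section Expectation.
Variables (R : comPzSemiRingType) (T : finType) (w : T -> R).

Definition expect (f : T -> R) : R := \sum_t w t * f t.

Lemma eq_expect_supp (f g : T -> R) :
  (forall t, w t != 0 -> f t = g t) -> expect f = expect g.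
Proof.
move=> fg; apply: eq_bigr => t _.
by have [->|/fg ->] := eqVneq (w t) 0; rewrite ?mul0r.
Qed.

Lemma expectD (f g : T -> R) :
  expect (fun t => f t + g t) = expect f + expect g.
Proof. by rewrite -big_split; apply: eq_bigr => t _; rewrite mulrDr. Qed.

Lemma expectZ (a : R) (f : T -> R) :
  expect (fun t => a * f t) = a * expect f.
Proof. by rewrite mulr_sumr; apply: eq_bigr => t _; rewrite mulrCA. Qed.

Lemma expect_sum (I : Type) (r : seq I) (P : pred I) (F : I -> T -> R) :
  expect (fun t => \sum_(x <- r | P x) F x t) = \sum_(x <- r | P x) expect (F x).
Proof.
by rewrite exchange_big; apply: eq_bigr => t _; rewrite mulr_sumr.
Qed.

Lemma expect_cst (a : R) : \sum_t w t = 1 -> expect (fun=> a) = a.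
Proof. by move=> w1; rewrite /expect -mulr_suml w1 mul1r. Qed.

End Expectation.

Notation pairs N := ({set 'I_N} * {set 'I_N})%type.

Definition pact N (s : {perm 'I_N}) (p : pairs N) : pairs N :=
  (s @: p.1, s @: p.2).

Lemma pact_inj N (s : {perm 'I_N}) : injective (pact s).
Proof.
move=> [H1 W1] [H2 W2] [] /= e1 e2.
by rewrite (imset_inj (@perm_inj _ s) e1) (imset_inj (@perm_inj _ s) e2).
Qed.

Section PairDistribution.
Variables (R : realFieldType) (N rho psi : nat).
Hypothesis hcard : (rho + psi <= N)%N.

Local Notation P := (pair_prob R rho psi).
Local Notation E := (expect P).

Lemma pair_prob_neq0 (p : pairs N) :
  P p != 0 -> [/\ #|p.1| = rho, p.2 \subset ~: p.1 & #|p.2| = psi].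
Proof.
by rewrite /pair_prob; case: and3P => [[/eqP ? ? /eqP ?] _|]; [split | rewrite eqxx].
Qed.

Lemma pair_prob_pact (s : {perm 'I_N}) (p : pairs N) : P (pact s p) = P p.
Proof.
rewrite /pair_prob /= !card_imset; try exact: perm_inj.
rewrite -!disjoints_subset -!setI_eq0 -imsetI ?imset_eq0 //.
by move=> x y _ _; apply: perm_inj.
Qed.

Lemma expect_pact (s : {perm 'I_N}) (f : pairs N -> R) :
  E (fun p => f (pact s p)) = E f.
Proof.
rewrite [RHS](reindex_inj (@pact_inj N s)).
by apply: eq_bigr => p _; rewrite pair_prob_pact.
Qed.

Lemma sum_pair_prob : \sum_(p : pairs N) P p = 1.
Proof.
have binN k n : (k <= n)%N -> ('C(n, k)%:R : R) != 0.
  by move=> kn; rewrite pnatr_eq0 -lt0n bin_gt0.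
pose c : R := ('C(N, rho)%:R)^-1 * ('C(N - rho, psi)%:R)^-1.
have fiber (H : {set 'I_N}) :
    \sum_(W : {set 'I_N}) P (H, W) = if #|H| == rho then c * 'C(N - rho, psi)%:R else 0.
  rewrite /pair_prob /=; case: eqP => [cardH|_]; last by rewrite big1.
  rewrite -big_mkcond -big_set sumr_const cards_draws.
  by rewrite cardsCs setCK card_ord cardH mulr_natr.
rewrite -(pair_big xpredT xpredT (fun H W => P (H, W))) /=.
rewrite (eq_bigr _ (fun H _ => fiber H)) -big_mkcond -big_set sumr_const.
rewrite card_draws card_ord -mulr_natr /c.
by field; rewrite !binN //; lia.
Qed.

Lemma expect_mem (X : pairs N -> {set 'I_N}) (n : nat) (x : 'I_N) :
    (forall s p, X (pact s p) = s @: X p) ->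
    (forall p, P p != 0 -> #|X p| = n) ->
  E (fun p => (x \in X p)%:R) = n%:R / N%:R.
Proof.
move=> X_pact X_card.
have mem_y y : E (fun p => (y \in X p)%:R) = E (fun p => (x \in X p)%:R).
  rewrite -(expect_pact (tperm x y)); apply: eq_bigr => p _.
  set s := tperm x y; have -> : y = s x by rewrite tpermL.
  by rewrite X_pact mem_imset //; apply: perm_inj.
have sum_y : \sum_y E (fun p => (y \in X p)%:R) = n%:R.
  rewrite -expect_sum (eq_expect_supp (g := fun=> n%:R)) ?expect_cst //.
    exact: sum_pair_prob.
  by move=> p /X_card <-; rewrite sum_mem_natr.
have N_neq0 : (N%:R : R) != 0 by rewrite pnatr_eq0 -lt0n (leq_ltn_trans _ (ltn_ord x)).
rewrite -sum_y (eq_bigr _ (fun y _ => mem_y y)) sumr_const card_ord.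
by rewrite -[_ *+ N]mulr_natr mulfK.
Qed.

Lemma expect_mem2 (x y : 'I_N) : x != y ->
  E (fun p => (x \in p.2)%:R * (y \in p.1)%:R) =
  psi%:R * rho%:R / (N%:R * (N%:R - 1)).
Proof.
move=> xy.
pose F x' := E (fun p => (x' \in p.2)%:R * (y \in p.1)%:R).
have F_x' x' : x' != y -> F x' = F x.
  move=> x'y; rewrite /F -(expect_pact (tperm x x')); apply: eq_bigr => p _ /=.
  set s := tperm x x'.
  have [-> ->] : x' = s x /\ y = s y by rewrite tpermL tpermD.
  by rewrite !mem_imset ?(tpermD xy x'y) //; apply: perm_inj.
(* On the support, [y \in p.1] forces [y \notin p.2], so the [x'] sum counts all of [p.2]. *)
have sum_x' : \sum_(x' | x' != y) F x' = psi%:R * (rho%:R / N%:R).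
  transitivity (E (fun p => psi%:R * (y \in p.1)%:R)); last first.
    by rewrite expectZ (@expect_mem fst rho y) //; move=> p /pair_prob_neq0[].
  rewrite -expect_sum.
  apply: eq_expect_supp => p /pair_prob_neq0[_ /subsetP W_H W_card].
  rewrite -mulr_suml; case: (boolP (y \in p.1)) => y_H; last by rewrite !mulr0.
  congr (_ * _); rewrite -W_card -sum_mem_natr [RHS](bigD1 y) //=.
  rewrite (_ : y \in p.2 = false) ?mulr0n ?add0r //.
  by apply: contraTF y_H => /W_H; rewrite inE.
have N_gt1 : (1 < N)%N by have := max_card [set x; y]; rewrite cards2 xy card_ord.
have N1_neq0 : (N%:R - 1 : R) != 0.
  by rewrite -(natrB _ (ltnW N_gt1)) pnatr_eq0 subn_eq0 -ltnNge.
have N_neq0 : (N%:R : R) != 0 by rewrite pnatr_eq0 -lt0n ltnW.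
move: sum_x'; rewrite (eq_bigr _ F_x') sumr_const cardC1 card_ord /F.
rewrite -[_ *+ _]mulr_natr -subn1 natrB ?(ltnW N_gt1) // => sum_x'.
apply: (mulIf N1_neq0); rewrite sum_x'.
by field; rewrite N_neq0 N1_neq0.
Qed.

End PairDistribution.

Section ConfigDistribution.
Variables (R : realFieldType) (N M : nat) (rho psi : 'I_M -> nat).
Hypothesis hcard : forall k, (rho k + psi k <= N)%N.

Local Notation E := (expect (config_prob R rho psi)).
Local Notation Ek k := (expect (pair_prob R (rho k) (psi k))).

Lemma expect_config_prod (f : 'I_M -> pairs N -> R) :
  E (fun c => \prod_m f m (c m)) = \prod_m Ek m (f m).
Proof.
rewrite /expect bigA_distr_bigA; apply: eq_bigr => c _.
by rewrite -big_split.
Qed.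

Lemma expect_config_prod_in (S : {set 'I_M}) (f : 'I_M -> pairs N -> R) :
  E (fun c => \prod_(m in S) f m (c m)) = \prod_(m in S) Ek m (f m).
Proof.
pose g m t := if m \in S then f m t else 1.
transitivity (E (fun c => \prod_m g m (c m))).
  by apply: eq_expect_supp => c _; rewrite big_mkcond.
rewrite expect_config_prod [RHS]big_mkcond; apply: eq_bigr => m _.
by rewrite /g; case: (m \in S) => //; rewrite expect_cst ?sum_pair_prob.
Qed.

Lemma expect_config1 (i : 'I_M) (f : pairs N -> R) :
  E (fun c => f (c i)) = Ek i f.
Proof.
have := expect_config_prod_in [set i] (fun=> f); rewrite big_set1 => <-.
by apply: eq_expect_supp => c _; rewrite big_set1.
Qed.

Lemma expect_config2 (i k : 'I_M) (f g : pairs N -> R) : i != k ->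
  E (fun c => f (c i) * g (c k)) = Ek i f * Ek k g.
Proof.
move=> ik; pose h m := if m == i then f else g.
have ki : (k == i) = false by rewrite eq_sym (negbTE ik).
have i_notin_k : i \notin [set k] by rewrite inE.
have prod_ik F : \prod_(m in [set i; k]) F m = F i * F k :> R.
  by rewrite big_setU1 // big_set1.
have := expect_config_prod_in [set i; k] h; rewrite prod_ik /h eqxx ki => <-.
by apply: eq_expect_supp => c _; rewrite prod_ik eqxx ki.
Qed.

End ConfigDistribution.

Lemma primary_degreeE N M (c : config N M) (i : 'I_M) (j : 'I_N) :
  j \notin Has c i ->
  primary_degree c (i, j) =
  \sum_(k < M | k != i) ((j \in Wants c k) +
     \sum_(l < N | l != j) [&& l \in Has c i, l \in Wants c k & j \in Has c k])%N.
Proof.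
move=> /negbTE jHi.
rewrite /primary_degree; set A := [set w | _].
rewrite -sum1_card big_mkcond (eq_bigr (fun w => ((w.1, w.2) \in A : nat)));
  last by case=> k l _; case: ((k, l) \in A).
rewrite -(pair_bigA _ (fun k l => ((k, l) \in A : nat))) (bigD1 i) //=.
rewrite big1 ?add0n => [|l _]; last first.
  rewrite inE /is_vertex /idnc_adj /= xpair_eqE eqxx jHi orbF.
  by case: (j == l); rewrite ?andbF.
apply: eq_bigr => k ki; rewrite (bigD1 j) //=; congr (_ + _)%N.
  by rewrite inE /is_vertex /idnc_adj /= xpair_eqE eqxx andbT eq_sym (negbTE ki) andbT.
apply: eq_bigr => l lj.
rewrite inE /is_vertex /idnc_adj /= xpair_eqE eq_sym (negbTE ki) eq_sym (negbTE lj) /=.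
by case: (l \in Has c i); case: (l \in Wants c k); case: (j \in Has c k).
Qed.

Section ExpectedPrimaryDegree.
Variables (R : realFieldType) (N M : nat) (rho psi : 'I_M -> nat).
Hypothesis hcard : forall k, (rho k + psi k <= N)%N.
Variables (i : 'I_M) (j : 'I_N).

Local Notation E := (expect (config_prob R rho psi)).
Local Notation Ek k := (expect (pair_prob R (rho k) (psi k))).

Lemma expected_primary_degreeE :
  expected_primary_degree R rho psi i j =
  E (fun c => (j \in Wants c i)%:R * (primary_degree c (i, j))%:R) /
  E (fun c => (j \in Wants c i)%:R).
Proof. by congr (_ / _); apply: eq_bigr => c _; rewrite mulrA. Qed.

Lemma expect_wanted : E (fun c => (j \in Wants c i)%:R) = (psi i)%:R / N%:R.
Proof.
rewrite (expect_config1 hcard i (fun p => (j \in p.2)%:R)).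
by apply: expect_mem => // p /pair_prob_neq0[].
Qed.

Lemma wanted_primary_degreeE (c : config N M) : config_prob R rho psi c != 0 ->
  ((j \in Wants c i)%:R * (primary_degree c (i, j))%:R : R) =
  \sum_(k < M | k != i) ((j \in (c i).2)%:R * (j \in (c k).2)%:R +
    \sum_(l < N | l != j)
      ((j \in (c i).2)%:R * (l \in (c i).1)%:R) * ((l \in (c k).2)%:R * (j \in (c k).1)%:R)).
Proof.
move=> c_neq0; have [jWi|_] := boolP (j \in Wants c i); last first.
  by rewrite mul0r big1 // => k _; rewrite mul0r add0r big1 // => l _; rewrite !mul0r.
have jHi : j \notin Has c i.
  have /pair_prob_neq0[_ /subsetP WH _] : pair_prob R (rho i) (psi i) (c i) != 0.
    by apply: contraNneq c_neq0; rewrite /config_prob (bigD1 i) //= => ->; rewrite mul0r.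
  by have := WH _ jWi; rewrite inE.
rewrite (primary_degreeE jHi) mul1r natr_sum.
apply: eq_bigr => k _.
rewrite natrD natr_sum mul1r; congr (_ + _); apply: eq_bigr => l _.
by rewrite mul1r -!mulnb !natrM mulrA.
Qed.

Lemma expect_wanted_primary_degree : (2 <= N)%N ->
  E (fun c => (j \in Wants c i)%:R * (primary_degree c (i, j))%:R) =
  \sum_(k < M | k != i) (psi i)%:R / N%:R *
     ((psi k)%:R / N%:R * (1 + (rho k)%:R * (rho i)%:R / (N%:R - 1))).
Proof.
move=> N_gt1.
have N_neq0 : (N%:R : R) != 0 by rewrite pnatr_eq0 -lt0n ltnW.
have N1_neq0 : (N%:R - 1 : R) != 0.
  by rewrite -(natrB _ (ltnW N_gt1)) pnatr_eq0 subn_eq0 -ltnNge.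
rewrite (eq_expect_supp (fun c => @wanted_primary_degreeE c)).
rewrite expect_sum; apply: eq_bigr => k ki.
have ik : i != k by rewrite eq_sym.
rewrite expectD (expect_config2 hcard (fun p => (j \in p.2)%:R) (fun p => (j \in p.2)%:R) ik).
rewrite expect_sum.
under eq_bigr do rewrite (expect_config2 hcard (fun p => (j \in p.2)%:R * (_ \in p.1)%:R)
                            (fun p => (_ \in p.2)%:R * (j \in p.1)%:R) ik).
have mem_W m : Ek m (fun p => (j \in p.2)%:R) = (psi m)%:R / N%:R.
  by apply: expect_mem => // p /pair_prob_neq0[].
rewrite !mem_W.
under eq_bigr => l lj do rewrite !expect_mem2 // 1?eq_sym //.
rewrite sumr_const cardC1 card_ord -[_ *+ N.-1]mulr_natr -subn1 natrB ?(ltnW N_gt1) //.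
by field; rewrite N_neq0 N1_neq0.
Qed.

End ExpectedPrimaryDegree.

Theorem theorem6 (R : realFieldType) (N M : nat) (rho psi : 'I_M -> nat)
    (hN : (2 <= N)%N)
    (hcard : forall k : 'I_M, (rho k + psi k <= N)%N)
    (i : 'I_M) (hpsi : (1 <= psi i)%N) (j : 'I_N) :
  @expected_primary_degree R N M rho psi i j =
  \sum_(k < M | k != i)
     ((psi k)%:R / N%:R * (1 + (rho k)%:R * (rho i)%:R / (N%:R - 1))).
Proof.
have wanted_neq0 : ((psi i)%:R / N%:R : R) != 0.
  by rewrite mulf_neq0 ?invr_eq0 ?pnatr_eq0 -?lt0n // ltnW.
rewrite expected_primary_degreeE expect_wanted_primary_degree //.
by rewrite expect_wanted // -mulr_sumr mulrC mulKf.
Qed.
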